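(* Let $f^-(x)=x$ and let $f^+:[0,1]\to[0,1]$ satisfy $f^+(x)\le 2x$ for all $x\in[0,1]$. Then for all $x,y,z\in[0,1]$, writing $q=f^+(x)$, \[ ALG=y(1-z)+z(1-y)+(1-q)(1-z)+(1-q)(1-y),\qquad LP=x(1-yz)+(1-y)(1-qz)+(1-z)(1-qy), \] we have $2\,LP\ge ALG$; that is, $2LP(uvw)\ge ALG(uvw)$ for every $(+,-,-)$-triangle.
   Context: For a triangle $uvw$ with one positive edge of length $x$ and two negative edges of lengths $y,z$ (all in $[0,1]$), with cut probabilities $f^+(x)$ for the positive edge and $f^-(y),f^-(z)$ for the negative edges, the per-triangle quantities of the pivot rounding algorithm are $ALG=f^-(y)(1-f^-(z))+f^-(z)(1-f^-(y))+(1-f^+(x))(1-f^-(z))+(1-f^+(x))(1-f^-(y))$ and $LP=x(1-f^-(y)f^-(z))+(1-y)(1-f^+(x)f^-(z))+(1-z)(1-f^+(x)f^-(y))$; with $f^-(t)=t$ these are the expressions in the claim. *)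

From Stdlib Require Import Reals.
Open Scope R_scope.

(* Per-triangle quantities of the pivot rounding algorithm for a (+,-,-)
   triangle with positive edge length x and negative edge lengths y, z. *)
Definition ALG (fp fm : R -> R) (x y z : R) : R :=
  fm y * (1 - fm z) + fm z * (1 - fm y)
  + (1 - fp x) * (1 - fm z) + (1 - fp x) * (1 - fm y).

Definition LP (fp fm : R -> R) (x y z : R) : R :=
  x * (1 - fm y * fm z) + (1 - y) * (1 - fp x * fm z)
  + (1 - z) * (1 - fp x * fm y).

(* With [q = fp x], the difference [2 LP - ALG] is affine in [x] with slope
   [2 (1 - yz) >= 0]; lowering [x] to [q/2] leaves an expression affine in [q]
   that equals [2 (1-y)(1-z)] at [q = 0] and [5 (1-y)(1-z)] at [q = 1]. *)

From Stdlib Require Import Reals Lra.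
Open Scope R_scope.

Lemma two_LP_sub_ALG_id (fp : R -> R) (x y z : R) :
  2 * LP fp (fun t => t) x y z - ALG fp (fun t => t) x y z
  = (2 * x - fp x) * (1 - y * z) + (2 + 3 * fp x) * ((1 - y) * (1 - z)).
Proof. unfold LP, ALG; ring. Qed.

Lemma two_LP_sub_ALG_ge0 (fp : R -> R) (x y z : R) :
  0 <= fp x <= 2 * x -> 0 <= y <= 1 -> 0 <= z <= 1 ->
  0 <= 2 * LP fp (fun t => t) x y z - ALG fp (fun t => t) x y z.
Proof.
  intros hq hy hz.
  rewrite two_LP_sub_ALG_id.
  assert (hyz : y * z <= 1).
  { rewrite <- (Rmult_1_r 1); apply Rmult_le_compat; lra. }
  apply Rplus_le_le_0_compat; apply Rmult_le_pos; try lra.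
  apply Rmult_le_pos; lra.
Qed.

Theorem lemma10 (fp : R -> R)
  (hrange : forall t, 0 <= t <= 1 -> 0 <= fp t <= 1)
  (hbound : forall t, 0 <= t <= 1 -> fp t <= 2 * t) :
  forall x y z : R, 0 <= x <= 1 -> 0 <= y <= 1 -> 0 <= z <= 1 ->
    2 * LP fp (fun t => t) x y z >= ALG fp (fun t => t) x y z.
Proof.
  intros x y z hx hy hz.
  assert (hq : 0 <= fp x <= 2 * x).
  { split; [apply hrange | apply hbound]; exact hx. }
  pose proof (two_LP_sub_ALG_ge0 fp x y z hq hy hz).
  lra.
Qed.
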